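(* Let $d\geq 1$, let $p_1<p_2<\dots<p_d$ be the first $d$ prime numbers, let $N\geq 1$ be an integer, and let $C>1$ and $\sigma\in\mathbb{R}$. Let $\mathbf{S}_1$ be the $(d+1)\times d$ real matrix whose $i$-th column ($1\le i\le d$) has entry $\ln p_i$ in row $i$, entry $C\ln p_i$ in row $d+1$, and zeros elsewhere, and let $\mathbf{t}=(0,\dots,0,C\ln N)^T\in\mathbb{R}^{d+1}$. Let $\mathbf{z}=(z_1,\dots,z_d)\in\mathbb{Z}^{d}$ and put $$u=\prod_{1\le i\le d,\ z_i>0}p_i^{z_i},\qquad k=\prod_{1\le i\le d,\ z_i<0}p_i^{-z_i}.$$ If $$\|\mathbf{S}_1\mathbf{z}-\mathbf{t}\|_1\leq 2\ln C+2\sigma\ln p_d-\ln N,$$ then $|u-kN|\leq p_d^{\sigma}$.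
   Context: $\ln$ denotes the natural logarithm and $\|\cdot\|_1$ the $\ell^1$ norm on $\mathbb{R}^{d+1}$. Empty products equal $1$. *)

From HB Require Import structures.
From mathcomp Require Import all_boot all_order all_algebra.
From mathcomp Require Import all_classical all_reals all_analysis.
Set Implicit Arguments. Unset Strict Implicit. Unset Printing Implicit Defensive.
Import Order.TTheory GRing.Theory Num.Theory.
Local Open Scope ring_scope.

(* [first_primes d p] : p 0 < p 1 < ... < p (d-1) are exactly the first d primes
   (the paper's p_1 < ... < p_d, shifted to 0-based indices). *)
Definition first_primes (d : nat) (p : nat -> nat) : Prop :=
  (forall i, (i < d)%N -> prime (p i)) /\
  (forall i j, (i < j)%N -> (j < d)%N -> (p i < p j)%N) /\
  (forall q, prime q -> (q <= p d.-1)%N -> exists2 i, (i < d)%N & p i = q).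

Definition S1mat (R : realType) (d : nat) (p : nat -> nat) (C : R) : 'M[R]_(d.+1, d) :=
  \matrix_(i < d.+1, j < d)
     (if (i : nat) == (j : nat) then ln ((p j)%:R : R)
      else if (i : nat) == d then C * ln ((p j)%:R : R) else 0).

Definition tvec (R : realType) (d : nat) (C : R) (N : nat) : 'cV[R]_(d.+1) :=
  \col_(i < d.+1) (if (i : nat) == d then C * ln (N%:R : R) else 0).

Definition l1norm (R : realType) (n : nat) (v : 'cV[R]_n) : R :=
  \sum_(i < n) `|v i ord0|.

Definition u_of (d : nat) (p : nat -> nat) (z : 'cV[int]_d) : nat :=
  (\prod_(i < d | (0 < z i ord0)%R) p i ^ `|z i ord0|%N)%N.
Definition k_of (d : nat) (p : nat -> nat) (z : 'cV[int]_d) : nat :=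
  (\prod_(i < d | (z i ord0 < 0)%R) p i ^ `|z i ord0|%N)%N.

(* Writing U = u and K = k N, the l^1 norm equals ln U + ln K - ln N + C |ln U - ln K|,
   so the hypothesis reads U K (max(U,K)/min(U,K))^C <= C^2 A^2 with A = p_d^sigma.
   With t = min/max this gives (U - K)^2 <= A^2 C^2 (1 - t)^2 t^(C-1), and the last
   factor C^2 (1 - t)^2 t^(C-1) is at most 1 on (0, 1), as the tangent-line bound
   ln x <= x - 1 shows at its maximiser t = (C-1)/(C+1). *)
Set Warnings "-notation-overridden,-ambiguous-paths,-notation-incompatible-prefix".
From HB Require Import structures.
From mathcomp Require Import all_boot all_order all_algebra.
From mathcomp Require Import all_classical all_reals all_analysis.
From mathcomp Require Import ring lra.
Set Implicit Arguments.
Unset Strict Implicit.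
Unset Printing Implicit Defensive.

Import Order.TTheory GRing.Theory Num.Theory.
Local Open Scope ring_scope.

Section LogInequalities.
Variable R : realType.
Implicit Types A C t X Y : R.

Lemma ln_le_subr1 (x : R) : 0 < x -> ln x <= x - 1.
Proof.
by move=> x_gt0; have := @le_ln1Dx R (x - 1); rewrite addrCA subrr addr0; apply; lra.
Qed.

Lemma lnC2_1Bt2_tCB1_le0 C t : 1 < C -> 0 < t -> t < 1 ->
  2 * ln C + 2 * ln (1 - t) + (C - 1) * ln t <= 0.
Proof.
move=> C_gt1 t_gt0 t_lt1.
pose t0 := (C - 1) / (C + 1).
have C1_ge0 : 0 <= C - 1 by lra.
have t0_gt0 : 0 < t0 by rewrite divr_gt0 //; lra.
have oneBt0_gt0 : 0 < 1 - t0.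
  have -> : 1 - t0 = 2 / (C + 1) by rewrite /t0; field; lra.
  by rewrite divr_gt0 //; lra.
(* tangent lines of ln at 1, applied to C (1 - t0) and t0 *)
have peak : 2 * ln C + 2 * ln (1 - t0) + (C - 1) * ln t0 <= 0.
  have lnC1Bt0 : ln C + ln (1 - t0) <= C * (1 - t0) - 1.
    by rewrite -lnM ?posrE; [apply: ln_le_subr1; apply: mulr_gt0|..]; lra.
  have lnt0 := ler_wpM2l C1_ge0 (ln_le_subr1 t0_gt0).
  have -> : 0 = 2 * (C * (1 - t0) - 1) + (C - 1) * (t0 - 1) by rewrite /t0; field; lra.
  lra.
(* the weights C - 1 and 2 make the tangent-line bounds at t0 sum to 0 *)
have lnt : ln t - ln t0 <= t / t0 - 1.
  by rewrite -ln_div ?posrE //; apply: ln_le_subr1; apply: divr_gt0.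
have ln1Bt : ln (1 - t) - ln (1 - t0) <= (1 - t) / (1 - t0) - 1.
  rewrite -ln_div ?posrE //; last lra.
  by apply: ln_le_subr1; apply: divr_gt0 => //; lra.
have lnt' := ler_wpM2l C1_ge0 lnt.
have ln1Bt' := ler_wpM2l (ler0n _ 2) ln1Bt.
have tangents : (C - 1) * (t / t0 - 1) + 2%:R * ((1 - t) / (1 - t0) - 1) = 0.
  by rewrite /t0; field; lra.
lra.
Qed.

Lemma subr_le_of_ln_bound X Y A C : 1 < C -> 0 < Y -> Y < X -> 0 < A ->
  ln X + ln Y + C * (ln X - ln Y) <= 2 * ln C + 2 * ln A -> X - Y <= A.
Proof.
move=> C_gt1 Y_gt0 YltX A_gt0 bound.
have X_gt0 : 0 < X by apply: lt_trans YltX.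
set t := Y / X.
have t_gt0 : 0 < t by rewrite divr_gt0.
have t_lt1 : t < 1 by rewrite ltr_pdivrMr // mul1r.
have lnY : ln Y = ln X + ln t by rewrite -lnM ?posrE // /t mulrC divfK ?gt_eqF.
have XBY : X - Y = X * (1 - t) by rewrite /t mulrBr mulr1 mulrC divfK ?gt_eqF.
have peak := lnC2_1Bt2_tCB1_le0 C_gt1 t_gt0 t_lt1.
have oneBt_gt0 : 0 < 1 - t by rewrite subr_gt0.
rewrite -(@ler_ln R) ?posrE ?subr_gt0 // XBY lnM ?posrE //.
rewrite lnY in bound; lra.
Qed.

Lemma normB_le_of_ln_bound X Y A C : 1 < C -> 0 < X -> 0 < Y -> 0 < A ->
  ln X + ln Y + C * `|ln X - ln Y| <= 2 * ln C + 2 * ln A -> `|X - Y| <= A.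
Proof.
wlog YleX : X Y / Y <= X => [sym|] C_gt1 X_gt0 Y_gt0 A_gt0 bound.
  have [YleX|/ltW XleY] := leP Y X; first exact: sym.
  by rewrite distrC; apply: sym => //; rewrite [ln Y + _]addrC distrC.
move: YleX; rewrite le_eqVlt => /predU1P[->|YltX]; first by rewrite subrr normr0 ltW.
have lnYleX : ln Y <= ln X by rewrite ler_ln ?posrE // ltW.
rewrite ger0_norm ?subr_ge0 // in bound.
rewrite ger0_norm ?subr_ge0 ?(ltW YltX) //; exact: subr_le_of_ln_bound bound.
Qed.

End LogInequalities.

Lemma ln_prod (R : realType) (I : finType) (P : pred I) (F : I -> R) :
  (forall i, P i -> 0 < F i) ->
  ln (\prod_(i | P i) F i) = \sum_(i | P i) ln (F i).
Proof.
move=> F_gt0.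
suff [] : 0 < \prod_(i | P i) F i /\ ln (\prod_(i | P i) F i) = \sum_(i | P i) ln (F i).
  by [].
apply: (big_ind2 (fun a b => 0 < a /\ ln a = b)) => [|a b a' b' [a0 <-] [b0 <-]|i Pi].
- by rewrite ln1.
- by rewrite lnM ?mulr_gt0.
- by rewrite F_gt0.
Qed.

Section PrimeExponents.
Variables (R : realType) (d : nat) (p : nat -> nat).
Hypothesis p_gt0 : forall i : 'I_d, (0 < p i)%N.

Let lnp (i : 'I_d) : R := ln (p i)%:R.

Lemma lnp_ge0 i : 0 <= lnp i.
Proof. by rewrite ln_ge0 // ler1n p_gt0. Qed.

Lemma l1norm_S1mat_sub_tvec (C : R) (N : nat) (x : 'cV[R]_d) : 0 <= C ->
  l1norm (S1mat d p C *m x - tvec d C N)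
  = \sum_(i < d) lnp i * `|x i ord0| + C * `|\sum_(i < d) lnp i * x i ord0 - ln N%:R|.
Proof.
move=> C_ge0; rewrite /l1norm big_ord_recr /=; congr (_ + _).
  apply: eq_bigr => i _; rewrite !mxE (bigD1 i) //= big1 => [|j ji].
    by rewrite !mxE eqxx (ltn_eqF (ltn_ord i)) subr0 addr0 normrM ger0_norm ?lnp_ge0.
  have /negbTE ij : (i : nat) != j by rewrite eq_sym.
  by rewrite !mxE /= ij (ltn_eqF (ltn_ord i)) mul0r.
rewrite !mxE eqxx -[C in RHS]ger0_norm // -normrM mulrBr big_distrr.
congr `|_ - _|; apply: eq_bigr => j _.
by rewrite !mxE (gtn_eqF (ltn_ord j)) eqxx /= mulrA.
Qed.

Variable z : 'cV[int]_d.
Let zr (i : 'I_d) : R := (z i ord0)%:~R.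

Lemma u_of_gt0 : (0 < u_of p z)%N.
Proof. by apply: prodn_gt0 => i; rewrite expn_gt0 p_gt0. Qed.

Lemma k_of_gt0 : (0 < k_of p z)%N.
Proof. by apply: prodn_gt0 => i; rewrite expn_gt0 p_gt0. Qed.

Lemma ln_prod_expn_abs (P : pred 'I_d) :
  ln (\prod_(i | P i) p i ^ `|z i ord0|)%N%:R
  = \sum_(i < d) (if P i then lnp i * `|zr i| else 0).
Proof.
rewrite natr_prod ln_prod => [|i _]; last by rewrite natrX exprn_gt0 ?ltr0n.
rewrite big_mkcond; apply: eq_bigr => i _; case: ifP => // _.
by rewrite natrX lnXn ?ltr0n // -[ln _ *+ _]mulr_natr natr_absz intr_norm.
Qed.

Lemma sum_lnp_abs : \sum_(i < d) lnp i * `|zr i| = ln (u_of p z)%:R + ln (k_of p z)%:R.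
Proof.
rewrite !ln_prod_expn_abs -big_split; apply: eq_bigr => i _ /=.
by case: (ltgtP (z i ord0) 0) => [||zi0]; rewrite ?addr0 ?add0r // /zr zi0 normr0 mulr0.
Qed.

Lemma sum_lnp : \sum_(i < d) lnp i * zr i = ln (u_of p z)%:R - ln (k_of p z)%:R.
Proof.
rewrite !ln_prod_expn_abs -sumrB; apply: eq_bigr => i _ /=.
case: (ltgtP (z i ord0) 0) => [zi_lt0|zi_gt0|zi0]; rewrite /zr.
- by rewrite sub0r ltr0_norm ?ltrz0 // mulrN opprK.
- by rewrite subr0 gtr0_norm ?ltr0z.
- by rewrite zi0 mulr0 subr0.
Qed.

End PrimeExponents.

Theorem theorem2 (R : realType) (d : nat) (p : nat -> nat) (N : nat) (C sigma : R)
  (z : 'cV[int]_d) :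
  (1 <= d)%N -> first_primes d p -> (1 <= N)%N -> 1 < C ->
  @l1norm R d.+1 (@S1mat R d p C *m map_mx (fun x : int => x%:~R) z - @tvec R d C N)
    <= 2 * ln C + 2 * sigma * ln ((p d.-1)%:R) - ln (N%:R) ->
  `| ((@u_of d p z)%:R : R) - ((@k_of d p z * N)%N)%:R | <= ((p d.-1)%:R) `^ sigma.
Proof.
move=> d_gt0 [p_prime _] N_gt0 C_gt1.
have p_gt0 (i : 'I_d) : (0 < p i)%N by rewrite prime_gt0 ?p_prime.
have pd_gt0 : (0 < p d.-1)%N by rewrite prime_gt0 ?p_prime ?prednK.
rewrite (l1norm_S1mat_sub_tvec p_gt0); last lra.
under eq_bigr do rewrite mxE.
under [X in `|X - _|]eq_bigr do rewrite mxE.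
rewrite (sum_lnp_abs _ p_gt0) (sum_lnp _ p_gt0) => bound.
have lnkN : ln (k_of p z * N)%N%:R = ln (k_of p z)%:R + ln N%:R :> R.
  by rewrite natrM lnM ?posrE ?ltr0n ?k_of_gt0.
apply: normB_le_of_ln_bound C_gt1 _ _ _ _.
- by rewrite ltr0n u_of_gt0.
- by rewrite ltr0n muln_gt0 k_of_gt0.
- by rewrite powR_gt0 ?ltr0n.
- by rewrite lnkN ln_powR addrA opprD addrA mulrA; lra.
Qed.
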